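(* Let $C$ be a linear completely regular $[n,k,2]_q$ code with covering radius $\rho=1$, and let $n_a$ be the number of codewords at distance $1$ from any vector ${\bf x}\notin C$. Then the following are equivalent: (i) for any pair of distinct coordinate positions $i,j$ there exists a codeword of weight $2$ with support $\{i,j\}$; (ii) $n_a=n$; (iii) $|C|=q^{n-1}$; (iv) $C$ has a generator matrix of the form $[I\,|\,{\bf h}]$, where $I$ is the $(n-1)\times(n-1)$ identity matrix and ${\bf h}\in\mathbb{F}_q^{n-1}$ is a column vector of weight $n-1$; (v) the dual code of $C$ is linearly equivalent to the repetition $[n,1,n]_q$ code.
   Context: Hamming distance and weight; support of a vector = set of its nonzero coordinates; covering radius $\rho=\max_{\bf v}\min_{{\bf x}\in C}d({\bf v},{\bf x})$. $C$ is completely regular if for every vector ${\bf x}$, with $t=d({\bf x},C)$, the number of codewords at distance $i$ from ${\bf x}$ depends only on $t$ and $i$ (so $n_a$ is well defined). The repetition code is $\{(c,\dots,c):c\in\mathbb{F}_q\}$. Linear equivalence means image under ${\bf x}\mapsto{\bf x}M$ with $M$ monomial. *)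

From HB Require Import structures.
From mathcomp Require Import all_boot all_order all_algebra all_field.
Set Implicit Arguments. Unset Strict Implicit. Unset Printing Implicit Defensive.
Import GRing.Theory.
Local Open Scope ring_scope.

Section Codes.
Variables (F : finFieldType) (n : nat).
Implicit Types (x y c : 'rV[F]_n) (C : {set 'rV[F]_n}).

Definition supp x : {set 'I_n} := [set i | x 0 i != 0].
Definition wt x : nat := #|supp x|.
Definition hdist x y : nat := #|[set i | x 0 i != y 0 i]|.

Definition linear_code C : Prop :=
  (0 : 'rV[F]_n) \in C /\ forall (a : F) x y, x \in C -> y \in C -> a *: x + y \in C.

(* minimum distance d (of a linear code: minimum nonzero weight) *)
Definition min_dist C (d : nat) : Prop :=
  (exists2 c, c \in C & (c != 0) && (wt c == d)) /\
  (forall c, c \in C -> c != 0 -> (d <= wt c)%N).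

Definition dist_to x C (t : nat) : Prop :=
  (exists2 c, c \in C & hdist x c = t) /\ (forall c, c \in C -> (t <= hdist x c)%N).

Definition covering_radius C (r : nat) : Prop :=
  (forall v, exists2 c, c \in C & (hdist v c <= r)%N) /\
  (exists v, forall c, c \in C -> (r <= hdist v c)%N).

Definition nb_at C x (i : nat) : nat := #|[set c in C | hdist x c == i]|.

Definition completely_regular C : Prop :=
  forall x y (t : nat), dist_to x C t -> dist_to y C t ->
    forall i, nb_at C x i = nb_at C y i.

Definition dual_code C : {set 'rV[F]_n} :=
  [set y | [forall c in C, c *m y^T == 0]].

Definition repetition_code : {set 'rV[F]_n} :=
  [set (\row_(j < n) a) | a : F].

Definition monomial (M : 'M[F]_n) : bool :=
  [forall i, #|[set j | M i j != 0]| == 1%N] &&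
  [forall j, #|[set i | M i j != 0]| == 1%N].

Definition lin_equiv (C D : {set 'rV[F]_n}) : Prop :=
  exists2 M : 'M[F]_n, monomial M & D = [set x *m M | x in C].

(* the (n-1) x n matrix [I | h] *)
Definition std_gen (h : 'cV[F]_n.-1) : 'M[F]_(n.-1, n) :=
  \matrix_(i < n.-1, j < n) (if (j < n.-1)%N then ((i : nat) == j)%:R else h i 0).

Definition generated_by m (G : 'M[F]_(m, n)) C : Prop :=
  C = [set u *m G | u : 'rV[F]_m].

End Codes.

(* All five conditions are
   equivalent to [axes_complement C]: for every coordinate p, every vector lies
   in C + F e_p.  As d >= 2, c + b e_p determines (c, b), so this holds iff
   |C| q = q^n.  For x outside C, the codewords at distance 1 from x are the
   vectors x - b e_p in C, at most one per coordinate p, which gives (ii).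
   Finally the property yields codewords e_i - b_i e_p with all b_i <> 0: they
   are the weight-2 codewords of (i) and the rows of [I | h] in (iv), and they
   force every dual vector to be a multiple of (b_i)_i, so that diag(b)^-1 maps
   the dual code onto the repetition code. *)

From mathcomp Require Import all_boot all_order all_algebra all_field zify.
From mathcomp Require mxabelem.
Import GRing.Theory.
Local Open Scope ring_scope.
Set Implicit Arguments. Unset Strict Implicit. Unset Printing Implicit Defensive.

Local Notation "''e_' p" := (delta_mx (0 : 'I_1) p) (at level 8, p at level 2, format "''e_' p").

Lemma expn_predr m n : (0 < n)%N -> (m ^ n = m ^ n.-1 * m)%N.
Proof. by move=> n_gt0; rewrite -expnSr prednK. Qed.

Section Vectors.
Variables (F : finFieldType) (n : nat).
Implicit Types (x c : 'rV[F]_n) (b : F) (k p : 'I_n).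

Lemma diff_set_sub_delta x b p : b != 0 ->
  [set i | x 0 i != (x - b *: 'e_p) 0 i] = [set p].
Proof.
move=> b0; apply/setP => i; rewrite !inE !mxE eqxx /=.
have [-> | ip] := eqVneq i p; first by rewrite mulr1 -subr_eq0 opprB addrC subrK.
by rewrite mulr0 subr0 eqxx.
Qed.

Lemma diff_set1 x c k : [set i | x 0 i != c 0 i] = [set k] ->
  c = x - (x 0 k - c 0 k) *: 'e_k.
Proof.
move=> Dk; apply/rowP => i; rewrite !mxE eqxx /=.
have [-> | ik] := eqVneq i k; first by rewrite mulr1 opprB addrC subrK.
have : i \notin [set i | x 0 i != c 0 i] by rewrite Dk inE.
by rewrite inE negbK mulr0 subr0 => /eqP.
Qed.

End Vectors.

Section StandardGenerator.
Variables (F : finFieldType) (n : nat) (h : 'cV[F]_n.-1).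

Local Notation widen := (widen_ord (leq_pred n)).

Lemma mul_std_gen_widen (u : 'rV[F]_n.-1) j : (u *m std_gen h) 0 (widen j) = u 0 j.
Proof.
have jlt : (widen j < n.-1)%N := ltn_ord j.
rewrite !mxE (bigD1 j) //= big1 => [|i ij]; rewrite !mxE jlt ?eqxx ?mulr1 ?addr0 //.
by rewrite (inj_eq val_inj) (negbTE ij) mulr0.
Qed.

Lemma card_std_gen_span : #|[set u *m std_gen h | u : 'rV[F]_n.-1]| = (#|F| ^ n.-1)%N.
Proof.
rewrite card_imset ?card_mx ?mul1n // => u v /rowP uv.
by apply/rowP => j; rewrite -!mul_std_gen_widen uv.
Qed.

Lemma row_std_gen (l : 'I_n) i : (l : nat) = n.-1 ->
  row i (std_gen h) = 'e_(widen i) + h i 0 *: 'e_l.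
Proof.
move=> lE; apply/rowP => j; rewrite !mxE eqxx /=.
have [jlt | jge] := ltnP j n.-1.
  have /negbTE-> : j != l by rewrite -(inj_eq val_inj) /= lE neq_ltn jlt.
  by rewrite mulr0 addr0 eq_sym.
have jl : j = l by apply/val_inj; move: (ltn_ord j) jge; rewrite /= lE; lia.
rewrite jl eqxx mulr1.
have /negbTE-> : l != widen i by rewrite -(inj_eq val_inj) /= lE neq_ltn ltn_ord orbT.
by rewrite add0r.
Qed.

End StandardGenerator.

Section LinearEquivalence.
Variables (F : finFieldType) (n : nat).

Lemma monomial_inj (M : 'M[F]_n) : monomial M -> injective (fun x : 'rV[F]_n => x *m M).
Proof.
move=> /andP[/forallP rowM /forallP colM].
suff kerM (z : 'rV[F]_n) : z *m M = 0 -> z = 0.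
  by move=> x y xy; apply/eqP; rewrite -subr_eq0 (kerM (x - y)) // mulmxBl xy subrr.
move=> zM0; apply/rowP => i; rewrite mxE.
have [j Mi] := cards1P (rowM i).
have Mij : M i j != 0 by have := set11 j; rewrite -Mi inE.
have Mj : [set k | M k j != 0] = [set i].
  have [i' Mj] := cards1P (colM j).
  have : i \in [set k | M k j != 0] by rewrite inE.
  by rewrite Mj inE => /eqP->.
move/rowP/(_ j): zM0; rewrite !mxE (bigD1 i) //= big1 ?addr0 => [/eqP|k ki].
  by rewrite mulf_eq0 (negbTE Mij) orbF => /eqP.
have : k \notin [set k | M k j != 0] by rewrite Mj inE.
by rewrite inE negbK => /eqP->; rewrite mulr0.
Qed.

Lemma lin_equiv_card (D D' : {set 'rV[F]_n}) : lin_equiv D D' -> #|D'| = #|D|.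
Proof. by case=> M /monomial_inj Minj ->; rewrite card_imset. Qed.

Lemma card_repetition_code : (0 < n)%N -> #|repetition_code F n| = #|F|.
Proof. by move=> n_gt0; rewrite card_imset // => a b /rowP/(_ (Ordinal n_gt0)); rewrite !mxE. Qed.

Lemma lin_equiv_line_repetition (w : 'rV[F]_n) : (forall i, w 0 i != 0) ->
  lin_equiv [set a *: w | a : F] (repetition_code F n).
Proof.
move=> w0; pose M := diag_mx (\row_j (w 0 j)^-1).
have Mij i j : (M i j != 0) = (i == j).
  have [<- | ij] := eqVneq i j; rewrite !mxE ?eqxx ?mulr1n ?invr_eq0 ?w0 //.
  by rewrite (negbTE ij) mulr0n eqxx.
have wM a : (a *: w) *m M = \row_j a.
  by apply/rowP => j; rewrite mul_mx_diag !mxE -mulrA mulfV ?mulr1.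
exists M.
  by apply/andP; split; apply/forallP => i; apply/cards1P; exists i;
    apply/setP => j; rewrite !inE Mij // eq_sym.
apply/setP => v; apply/imsetP/imsetP => [[a _ ->] | [_ /imsetP[a _ ->] ->]].
  by exists (a *: w); [apply: imset_f | rewrite wM].
by exists a; rewrite ?wM.
Qed.

End LinearEquivalence.

Section LinearCode.
Variables (F : finFieldType) (n : nat) (C : {set 'rV[F]_n}).
Hypothesis C_lin : linear_code C.
Implicit Types (x y z c : 'rV[F]_n) (p k : 'I_n).

Lemma code0 : 0 \in C. Proof. by case: C_lin. Qed.

Lemma codeD x y : x \in C -> y \in C -> x + y \in C.
Proof. by case: C_lin => _ cD Cx Cy; rewrite -(scale1r x); apply: cD. Qed.

Lemma codeZ a x : x \in C -> a *: x \in C.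
Proof. by case: C_lin => C0 cD Cx; rewrite -(addr0 (a *: x)); apply: cD. Qed.

Lemma codeB x y : x \in C -> y \in C -> x - y \in C.
Proof. by move=> Cx Cy; rewrite -scaleN1r; apply: codeD (codeZ _ Cy). Qed.

Lemma code_sum m (f : 'I_m -> 'rV[F]_n) : (forall i, f i \in C) -> \sum_i f i \in C.
Proof. by move=> Cf; apply: (big_ind (fun v => v \in C)) => //; [apply: code0 | apply: codeD]. Qed.

Lemma card_code_mul_dual : (#|C| * #|dual_code C| = #|F| ^ n)%N.
Proof.
pose A := \matrix_(i < #|C|) (enum_val i : 'rV[F]_n).
have rowA c : c \in C -> exists i, row i A = c.
  by move=> Cc; exists (enum_rank_in Cc c); rewrite rowK enum_rankK_in.
have C_rowg : C = mxabelem.rowg A.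
  apply/setP => v; rewrite mxabelem.mem_rowg; apply/idP/idP => [/rowA[i <-]|/submxP[u ->]].
    exact: row_sub.
  rewrite mulmx_sum_row; apply: code_sum => i; apply: codeZ.
  by rewrite rowK enum_valP.
have dual_rowg : dual_code C = mxabelem.rowg (kermx A^T).
  apply/setP => y; rewrite mxabelem.mem_rowg sub_kermx inE -[y *m _]trmxK trmx_mul trmxK trmx_eq0.
  apply/forall_inP/eqP => [orthA|Ay0 c /rowA[i <-]].
    by apply/row_matrixP => i; rewrite row_mul rowK row0; apply/eqP/orthA/enum_valP.
  by rewrite -row_mul Ay0 row0.
rewrite {1}C_rowg dual_rowg !mxabelem.card_rowg mxrank_ker mxrank_tr -expnD.
by rewrite subnKC ?rank_leq_col.
Qed.

Definition axes_complement :=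
  forall p x, exists b : F, x - b *: 'e_p \in C.

Lemma code_sub_axis (b : 'I_n -> F) p x : (forall i, 'e_i - b i *: 'e_p \in C) ->
  x - (\sum_i x 0 i * b i) *: 'e_p \in C.
Proof.
move=> Cb; have -> : x - (\sum_i x 0 i * b i) *: 'e_p = \sum_i x 0 i *: ('e_i - b i *: 'e_p).
  rewrite {1}[x]row_sum_delta scaler_suml -sumrB; apply: eq_bigr => i _.
  by rewrite scalerBr scalerA.
by apply: code_sum => i; apply: codeZ.
Qed.

Lemma axes_complementP : (forall i p, exists b, 'e_i - b *: 'e_p \in C) -> axes_complement.
Proof.
move=> Cdelta p x; have [b Cb] := fin_all_exists (Cdelta^~ p).
by exists (\sum_i x 0 i * b i); apply: code_sub_axis.
Qed.

Lemma dual_code_coord (b : 'I_n -> F) p z : (forall i, 'e_i - b i *: 'e_p \in C) ->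
  z \in dual_code C -> z = z 0 p *: \row_i b i.
Proof.
move=> Cb; rewrite inE => /forall_inP orth; apply/rowP => i; rewrite !mxE mulrC.
have /eqP/rowP/(_ 0) := orth _ (Cb i).
by rewrite mulmxBl -scalemxAl -!rowE !mxE => /eqP; rewrite subr_eq0 => /eqP.
Qed.

Hypothesis C_wt : forall c, c \in C -> c != 0 -> (2 <= wt c)%N.

Lemma code_eq_off k c c' : c \in C -> c' \in C ->
  (forall i, i != k -> c 0 i = c' 0 i) -> c = c'.
Proof.
move=> Cc Cc' cc'; apply/subr0_eq.
have wt_le1 : (wt (c - c') <= 1)%N.
  have : supp (c - c') \subset [set k].
    by apply/subsetP => i; rewrite !inE !mxE; apply: contraR => /cc'->; rewrite subrr.
  by move/subset_leq_card; rewrite cards1.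
by apply: contraTeq wt_le1 => /(C_wt (codeB Cc Cc')); rewrite -ltnNge.
Qed.

Lemma scaled_delta_in_code b p : b *: 'e_p \in C -> b = 0.
Proof.
move=> Cbe; have /rowP/(_ p) : b *: 'e_p = 0 :> 'rV[F]_n.
  by apply: (code_eq_off (k := p) Cbe code0) => i ip; rewrite !mxE (negbTE ip) mulr0.
by rewrite !mxE !eqxx mulr1.
Qed.

Lemma delta_notin_code p : 'e_p \notin C.
Proof.
by apply/negP; rewrite -[X in X \in C]scale1r => /scaled_delta_in_code/eqP; rewrite oner_eq0.
Qed.

Lemma axes_coefs p : axes_complement ->
  exists2 b : 'I_n -> F, (forall i, 'e_i - b i *: 'e_p \in C) & forall i, b i != 0.
Proof.
move=> K; have [b Cb] := fin_all_exists (fun i => K p 'e_i).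
exists b => // i; apply: contraNneq (delta_notin_code i) => b0.
by move: (Cb i); rewrite b0 scale0r subr0.
Qed.

Lemma dual_code_axes (b : 'I_n -> F) p : (forall i, 'e_i - b i *: 'e_p \in C) ->
  dual_code C = [set a *: \row_i b i | a : F].
Proof.
move=> Cb; apply/setP => z; apply/idP/imsetP => [Dz | [a _ ->]].
  by exists (z 0 p); last exact: dual_code_coord.
rewrite inE; apply/forall_inP => c Cc.
have s0 : \sum_i c 0 i * b i = 0.
  apply: (@scaled_delta_in_code _ p).
  by have := codeB Cc (code_sub_axis c Cb); rewrite opprB addrC subrK.
apply/eqP/rowP => j; rewrite ord1 !mxE.
under eq_bigr do rewrite !mxE mulrCA.
by rewrite -mulr_sumr s0 mulr0.
Qed.

Lemma weight2_axes_complement :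
  (forall i j : 'I_n, i != j -> exists2 c, c \in C & supp c = [set i; j]) <-> axes_complement.
Proof.
split=> [w2 | K i j ij].
  apply: axes_complementP => i p.
  have [-> | ip] := eqVneq i p; first by exists 1; rewrite scale1r subrr code0.
  have [c Cc supp_c] := w2 i p ip.
  have in_supp k : (c 0 k != 0) = (k \in [set i; p]) by rewrite -supp_c inE.
  have ci0 : c 0 i != 0 by rewrite in_supp !inE eqxx.
  exists (- (c 0 p / c 0 i)); suff -> : 'e_i - - (c 0 p / c 0 i) *: 'e_p = (c 0 i)^-1 *: c.
    exact: codeZ.
  apply/rowP => k; rewrite !mxE eqxx /= mulNr opprK.
  have [-> | ki] := eqVneq k i; first by rewrite (negbTE ip) mulr0 addr0 mulVf.
  have [-> | kp] := eqVneq k p; first by rewrite mulr1 add0r mulrC.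
  move: (in_supp k); rewrite !inE (negbTE ki) (negbTE kp) => /negbFE/eqP->.
  by rewrite mulr0 addr0 mulr0.
have [b Cb b0] := axes_coefs j K; exists ('e_i - b i *: 'e_j) => //.
apply/setP => k; rewrite !inE !mxE eqxx /=.
have [-> | ki] := eqVneq k i; first by rewrite (negbTE ij) mulr0 subr0 oner_eq0.
have [_ | _] := eqVneq k j; last by rewrite mulr0 subrr eqxx.
by rewrite mulr1 sub0r oppr_eq0 b0.
Qed.

Lemma nb_at1_axes x : x \notin C ->
  nb_at C x 1 = #|[set p | [exists b, x - b *: 'e_p \in C]]|.
Proof.
move=> xNC; rewrite /nb_at; set S := [set c in C | _]; set P := [set p | _].
pose pos c := [pick k in [set i | x 0 i != c 0 i]].
have S_diff c : c \in S -> exists k, [set i | x 0 i != c 0 i] = [set k].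
  by rewrite inE => /andP[_ /cards1P].
have off c k i : [set i | x 0 i != c 0 i] = [set k] -> i != k -> c 0 i = x 0 i.
  by move=> /diff_set1-> ik; rewrite !mxE (negbTE ik) mulr0 subr0.
have pos_inj : {in S &, injective pos}.
  move=> c c' Sc Sc'; have [k Dk] := S_diff c Sc; have [k' Dk'] := S_diff c' Sc'.
  rewrite /pos Dk Dk' !pick_set1 => -[kk']; rewrite -kk' in Dk'.
  move: Sc Sc'; rewrite !inE => /andP[Cc _] /andP[Cc' _].
  by apply: (code_eq_off (k := k)) => // i ik; rewrite (off _ _ _ Dk) ?(off _ _ _ Dk').
have pos_S : pos @: S = Some @: P.
  apply/setP => o; apply/imsetP/imsetP => [[c Sc ->] | [p Pp ->]].
    have [k Dk] := S_diff c Sc; exists k; last by rewrite /pos Dk pick_set1.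
    move: Sc; rewrite !inE => /andP[Cc _].
    by apply/existsP; exists (x 0 k - c 0 k); rewrite -(diff_set1 Dk).
  move: Pp; rewrite inE => /existsP[b Cxb].
  have b0 : b != 0 by apply: contraNneq xNC => b0; move: Cxb; rewrite b0 scale0r subr0.
  exists (x - b *: 'e_p); first by rewrite !inE Cxb /hdist diff_set_sub_delta ?cards1.
  by rewrite /pos diff_set_sub_delta // pick_set1.
rewrite -(card_in_imset pos_inj) pos_S card_imset //; exact: Some_inj.
Qed.

Lemma nb_at1_axes_complement :
  (forall x, x \notin C -> nb_at C x 1 = n) <-> axes_complement.
Proof.
split=> [nb p x | K x xNC].
  have [Cx | xNC] := boolP (x \in C); first by exists 0; rewrite scale0r subr0.
  have : p \in [set p | [exists b, x - b *: 'e_p \in C]].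
    suff -> : [set p | [exists b, x - b *: 'e_p \in C]] = setT by rewrite inE.
    by apply/eqP; rewrite eqEcard subsetT cardsT card_ord -(nb_at1_axes xNC) nb //=.
  by rewrite inE => /existsP.
rewrite nb_at1_axes // -[RHS]card_ord -cardsT; apply: eq_card => p.
by rewrite !inE; apply/existsP.
Qed.

Lemma card_code_add_axis p :
  #|[set cb.1 + cb.2 *: 'e_p | cb in setX C [set: F]]| = (#|C| * #|F|)%N.
Proof.
rewrite card_in_imset ?cardsX ?cardsT // => -[c b] [c' b'].
rewrite !inE /= => /andP[Cc _] /andP[Cc' _] eq_cb.
have cc' : c = c'.
  apply: (code_eq_off (k := p)) => // i ip.
  by move/rowP: eq_cb => /(_ i); rewrite !mxE (negbTE ip) !mulr0 !addr0.
by move: eq_cb; rewrite cc' => /addrI/rowP/(_ p); rewrite !mxE !eqxx !mulr1 => ->.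
Qed.

Lemma axes_complement_card : (0 < n)%N ->
  axes_complement <-> #|C| = (#|F| ^ n.-1)%N.
Proof.
move=> n_gt0; have q_gt0 : (0 < #|F|)%N by apply/card_gt0P; exists 0.
pose CF p := [set cb.1 + cb.2 *: 'e_p | cb in setX C [set: F]].
have CF_full p : CF p = setT <-> #|C| = (#|F| ^ n.-1)%N.
  transitivity (#|CF p| = #|[set: 'rV[F]_n]|).
    by split=> [-> // | cardCF]; apply/eqP; rewrite eqEcard subsetT cardCF /=.
  rewrite card_code_add_axis cardsT card_mx mul1n (expn_predr _ n_gt0).
  by split=> [/eqP | ->]; first by rewrite eqn_pmul2r // => /eqP.
split=> [K | card_C p x].
  apply: (CF_full (Ordinal n_gt0)).1; apply/setP => x; rewrite inE.
  have [b Cb] := K (Ordinal n_gt0) x; apply/imsetP.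
  by exists (x - b *: 'e_(Ordinal n_gt0), b); rewrite ?inE ?Cb //= subrK.
have : x \in CF p by rewrite (CF_full p).2 // inE.
case/imsetP=> -[c b].
by rewrite !inE /= => /andP[Cc _] ->; exists b; rewrite addrK.
Qed.

Lemma axes_complement_std_gen : (0 < n)%N -> axes_complement ->
  exists2 h : 'cV[F]_n.-1, wt h^T = n.-1 & generated_by (std_gen h) C.
Proof.
move=> n_gt0 K; have l_lt : (n.-1 < n)%N by rewrite ltn_predL.
pose l := Ordinal l_lt; have [b Cb b0] := axes_coefs l K.
pose h := \col_i - b (widen_ord (leq_pred n) i).
exists h.
  rewrite /wt -[RHS]card_ord -cardsT; apply: eq_card => i.
  by rewrite !inE !mxE oppr_eq0 b0.
have span_C : [set u *m std_gen h | u : 'rV_n.-1] \subset C.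
  apply/subsetP => _ /imsetP[u _ ->]; rewrite mulmx_sum_row.
  apply: code_sum => i; apply: codeZ.
  by rewrite (row_std_gen _ _ (l := l)) // mxE scaleNr.
apply/eqP; rewrite eq_sym eqEcard span_C card_std_gen_span.
by rewrite (axes_complement_card n_gt0).1 // leqnn.
Qed.

Lemma dual_repetition_card : (0 < n)%N ->
  lin_equiv (dual_code C) (repetition_code F n) <-> #|C| = (#|F| ^ n.-1)%N.
Proof.
move=> n_gt0; split=> [/lin_equiv_card | card_C].
  rewrite card_repetition_code // => card_dual.
  have q_gt0 : (0 < #|F|)%N by apply/card_gt0P; exists 0.
  have := card_code_mul_dual; rewrite -card_dual (expn_predr _ n_gt0) => /eqP.
  by rewrite eqn_pmul2r // => /eqP.
have [b Cb b0] := axes_coefs (Ordinal n_gt0) ((axes_complement_card n_gt0).2 card_C).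
by rewrite (dual_code_axes Cb); apply: lin_equiv_line_repetition => i; rewrite mxE b0.
Qed.

End LinearCode.

Theorem lemma3p5 (F : finFieldType) (n k : nat) (C : {set 'rV[F]_n}) :
  linear_code C ->
  #|C| = (#|F| ^ k)%N ->
  min_dist C 2 ->
  completely_regular C ->
  covering_radius C 1 ->
  [<-> (forall i j : 'I_n, i != j -> exists2 c, c \in C & supp c = [set i; j]);
       (forall x : 'rV[F]_n, x \notin C -> nb_at C x 1 = n);
       #|C| = (#|F| ^ n.-1)%N;
       (exists2 h : 'cV[F]_n.-1, wt (h^T) = n.-1 & generated_by (std_gen h) C);
       lin_equiv (dual_code C) (@repetition_code F n)].
Proof.
move=> C_lin _ [[c _ /andP[_ /eqP wt_c]] C_wt] _ _.
have n_gt0 : (0 < n)%N by rewrite -[n]card_ord (leq_trans _ (max_card (supp c))) // -/(wt c) wt_c.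
have card_K := axes_complement_card C_lin C_wt n_gt0.
tfae.
- by move/(weight2_axes_complement C_lin C_wt)/(nb_at1_axes_complement C_lin C_wt).
- by move/(nb_at1_axes_complement C_lin C_wt)/card_K.
- by move/card_K; apply: axes_complement_std_gen.
- move=> [h _ genC]; apply/(dual_repetition_card C_lin C_wt n_gt0).
  by rewrite genC card_std_gen_span.
- by move/(dual_repetition_card C_lin C_wt n_gt0)/card_K/(weight2_axes_complement C_lin C_wt).
Qed.
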